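(* Let $\{(\mathbf{x}^k,\mathbf{r}^k,\boldsymbol{\lambda}^k)\}$ be generated by Algorithm 1 with $0<\rho\le\frac{\beta}{m}$ and $\mathbf{P}_i\succeq L_i\mathbf{I}+\beta\mathbf{A}_i^\top\mathbf{A}_i$ for all $i$, and let $(\mathbf{x}^*,\boldsymbol{\lambda}^* )$ be a saddle point as in the assumption. Then $\lim_{k\to\infty}\mathbb{E}\,\Phi(\mathbf{x}^k,\mathbf{x}^*,\boldsymbol{\lambda}^* )=0$ and $\lim_{k\to\infty}\mathbb{E}\|\mathbf{r}^k\|=0$.
   Context: Problem: $\min_{\mathbf{x}} F(\mathbf{x}):=f(\mathbf{x})+g(\mathbf{x})$ s.t. $\mathbf{A}\mathbf{x}=\mathbf{b}$, where $\mathbf{x}=(\mathbf{x}_1;\ldots;\mathbf{x}_m)$ with blocks $\mathbf{x}_i\in\mathbb{R}^{n_i}$, $g(\mathbf{x})=\sum_{i=1}^m g_i(\mathbf{x}_i)$, $\mathbf{A}=[\mathbf{A}_1,\ldots,\mathbf{A}_m]$ with $\mathbf{A}_i\in\mathbb{R}^{q\times n_i}$, $\mathbf{b}\in\mathbb{R}^q$; $f$ is convex and continuously differentiable, each $g_i$ is proper, convex, lower semicontinuous. Define $\Phi(\bar{\mathbf{x}},\mathbf{x},\boldsymbol{\lambda})=F(\bar{\mathbf{x}})-F(\mathbf{x})-\langle\boldsymbol{\lambda},\mathbf{A}\bar{\mathbf{x}}-\mathbf{b}\rangle$. $\mathbf{U}_i\mathbf{y}$ denotes the vector whose $i$-th block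 is $\mathbf{y}_i$ and other blocks zero. Assumption (existence of a solution): there is $(\mathbf{x}^*,\boldsymbol{\lambda}^* )$ with $\mathbf{A}\mathbf{x}^*=\mathbf{b}$ and $\Phi(\mathbf{x},\mathbf{x}^*,\boldsymbol{\lambda}^* )\ge0$ for all $\mathbf{x}$. Assumption (gradient Lipschitz continuity): there are constants $L_i>0$ and $L_r$ with $\|\nabla_i f(\mathbf{x}+\mathbf{U}_i\mathbf{y})-\nabla_i f(\mathbf{x})\|\le L_i\|\mathbf{y}_i\|$ and $\|\nabla f(\mathbf{x}+\mathbf{U}_i\mathbf{y})-\nabla f(\mathbf{x})\|\le L_r\|\mathbf{y}_i\|$ for all $i,\mathbf{x},\mathbf{y}$. Algorithm 1 (randomized primal-dual block update): choose $\mathbf{x}^0$, set $\boldsymbol{\lambda}^0=\mathbf{0}$, $\mathbf{r}^0=\mathbf{A}\mathbf{x}^0-\mathbf{b}$, parameters $\beta>0,\rho>0$, symmetric PSD matrices $\mathbf{P}_i$. For $k=0,1,\ldots$: pick $i_k\in\{1,\ldots,m\}$ uniformly at random, independent of $i_0,\ldots,i_{k-1}$; set $\mathbf{x}_i^{k+1}=\mathbf{x}_i^k$ for $i\ne i_k$ and $$\mathbf{x}_{i_k}^{k+1}\in\arg\min_{\mathbf{x}_{i_k}}\big\langle\nabla_{i_k} f(\mathbf{x}^k)-\mathbf{A}_{i_k}^\top(\boldsymbol{\lambda}^k-\beta\mathbf{r}^k),\mathbf{x}_{i_k}\big\rangle+g_{i_k}(\mathbf{x}_{i_k})+\tfrac12\|\mathbf{x}_{i_k}-\mathbf{x}_{i_k}^k\|_{\mathbf{P}_{i_k}}^2$$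 (with $\|\mathbf{z}\|_{\mathbf{M}}^2=\mathbf{z}^\top\mathbf{M}\mathbf{z}$); then $\mathbf{r}^{k+1}=\mathbf{r}^k+\mathbf{A}_{i_k}(\mathbf{x}_{i_k}^{k+1}-\mathbf{x}_{i_k}^k)$ (so $\mathbf{r}^k=\mathbf{A}\mathbf{x}^k-\mathbf{b}$) and $\boldsymbol{\lambda}^{k+1}=\boldsymbol{\lambda}^k-\rho\mathbf{r}^{k+1}$. $\mathbb{E}$ is the total expectation over $i_0,i_1,\ldots$. *)

From Stdlib Require Import Reals.
From mathcomp Require Import ssreflect ssrfun ssrbool eqtype ssrnat seq fintype bigop.
Unset Printing Implicit Defensive.
Open Scope R_scope.

(* Extended reals (-oo never needed: proper functions take values in R ∪ {+oo}). *)
Inductive ER := Fin of R | PInf.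

Definition ER_add (a b : ER) : ER :=
  match a, b with Fin x, Fin y => Fin (x + y) | _, _ => PInf end.
(* scaling, only used with positive scalars *)
Definition ER_scale (t : R) (a : ER) : ER :=
  match a with Fin x => Fin (t * x) | PInf => PInf end.
Definition ER_le (a b : ER) : Prop :=
  match a, b with
  | _, PInf => True | PInf, Fin _ => False | Fin x, Fin y => x <= y end.
Definition ER_lt (a b : ER) : Prop :=
  match a, b with
  | Fin x, PInf => True | PInf, _ => False | Fin x, Fin y => x < y end.

Definition vec (d : nat) := 'I_d -> R.
Definition dot {d} (u v : vec d) : R := \big[Rplus/0]_(j < d) (u j * v j).
Definition vnorm {d} (u : vec d) : R := sqrt (dot u u).
Definition vsub {d} (u v : vec d) : vec d := fun j => u j - v j.
Definition vlin {d} (t : R) (u v : vec d) : vec d := fun j => t * u j + (1 - t) * v j.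

Definition BV (m : nat) (n : 'I_m -> nat) := forall i : 'I_m, vec (n i).
Definition badd {m n} (x y : BV m n) : BV m n := fun i j => x i j + y i j.
Definition bsub {m n} (x y : BV m n) : BV m n := fun i j => x i j - y i j.
Definition bdot {m n} (x y : BV m n) : R := \big[Rplus/0]_(i < m) dot (x i) (y i).
Definition bnorm {m n} (x : BV m n) : R := sqrt (bdot x x).
Definition Ublk {m n} (i : 'I_m) (y : BV m n) : BV m n :=
  fun j => if j == i then y j else (fun _ => 0).

(* A = [A_1, ..., A_m], A_i : q x n_i ; entries A i r a *)
Definition Amat (m : nat) (n : 'I_m -> nat) q := forall i : 'I_m, 'I_q -> 'I_(n i) -> R.
Definition Aiz {m n q} (A : Amat m n q) (i : 'I_m) (z : vec (n i)) : vec q :=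
  fun r => \big[Rplus/0]_(a < n i) (A i r a * z a).
Definition AiT {m n q} (A : Amat m n q) (i : 'I_m) (v : vec q) : vec (n i) :=
  fun a => \big[Rplus/0]_(r < q) (A i r a * v r).
Definition resid {m n q} (A : Amat m n q) (b : vec q) (x : BV m n) : vec q :=
  fun r => \big[Rplus/0]_(i < m) Aiz A i (x i) r - b r.

Definition qform {d} (M : 'I_d -> 'I_d -> R) (z : vec d) : R :=
  \big[Rplus/0]_(a < d) \big[Rplus/0]_(c < d) (z a * M a c * z c).

Definition convexR {m n} (f : BV m n -> R) : Prop :=
  forall x y t, 0 <= t <= 1 ->
    f (fun i j => t * x i j + (1 - t) * y i j) <= t * f x + (1 - t) * f y.
Definition is_gradient {m n} (f : BV m n -> R) (gf : BV m n -> BV m n) : Prop :=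
  forall x eps, 0 < eps -> exists delta, 0 < delta /\
    forall h, bnorm h < delta ->
      Rabs (f (badd x h) - f x - bdot (gf x) h) <= eps * bnorm h.
Definition continuousBV {m n} (G : BV m n -> BV m n) : Prop :=
  forall x eps, 0 < eps -> exists delta, 0 < delta /\
    forall y, bnorm (bsub y x) < delta -> bnorm (bsub (G y) (G x)) < eps.

Definition properER {d} (g : vec d -> ER) : Prop := exists u, g u <> PInf.
Definition convexER {d} (g : vec d -> ER) : Prop :=
  forall u v t, 0 < t < 1 ->
    ER_le (g (vlin t u v)) (ER_add (ER_scale t (g u)) (ER_scale (1 - t) (g v))).
Definition lscER {d} (g : vec d -> ER) : Prop :=
  forall u c, ER_lt (Fin c) (g u) -> exists delta, 0 < delta /\
    forall v, vnorm (vsub v u) < delta -> ER_lt (Fin c) (g v).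

Definition Fobj {m n} (f : BV m n -> R) (g : forall i : 'I_m, vec (n i) -> ER)
  (x : BV m n) : ER := ER_add (Fin (f x)) (\big[ER_add/Fin 0]_(i < m) g i (x i)).

(* Phi(xbar, x, lam) = F(xbar) - F(x) - <lam, A xbar - b>; only meaningful when
   F(x) is finite (PInf returned otherwise, never used). *)
Definition Phi {m n q} (f : BV m n -> R) (g : forall i : 'I_m, vec (n i) -> ER)
  (A : Amat m n q) (b : vec q) (xbar x : BV m n) (lam : vec q) : ER :=
  match Fobj f g x with
  | Fin v => ER_add (Fobj f g xbar) (Fin (- v - dot lam (resid A b xbar)))
  | PInf => PInf
  end.

(* Total expectation over i_0,...,i_{k-1} i.i.d. uniform on {1..m}: the quantity
   h depends on the history s = [:: i_0; ...; i_{k-1}]. *)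
Fixpoint esum {m : nat} (k : nat) (pre : seq 'I_m) (h : seq 'I_m -> R) : R :=
  match k with
  | 0 => h pre
  | k'.+1 => / INR m * \big[Rplus/0]_(i < m) esum k' (rcons pre i) h
  end.
Definition Expect {m} (k : nat) (h : seq 'I_m -> R) : R := esum k [::] h.

Fixpoint esumER {m : nat} (k : nat) (pre : seq 'I_m) (h : seq 'I_m -> ER) : ER :=
  match k with
  | 0 => h pre
  | k'.+1 => ER_scale (/ INR m) (\big[ER_add/Fin 0]_(i < m) esumER k' (rcons pre i) h)
  end.
Definition ExpectER {m} (k : nat) (h : seq 'I_m -> ER) : ER := esumER k [::] h.

Definition ER_cv (u : nat -> ER) (l : R) : Prop :=
  forall eps, 0 < eps -> exists N, forall k, (N <= k)%nat ->
    exists v, u k = Fin v /\ Rabs (v - l) < eps.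

Definition subobj {m n q} (A : Amat m n q) (b : vec q) (gf : BV m n -> BV m n)
  (g : forall i : 'I_m, vec (n i) -> ER) (P : forall i : 'I_m, 'I_(n i) -> 'I_(n i) -> R)
  (beta : R) (xk : BV m n) (lamk : vec q) (i : 'I_m) (z : vec (n i)) : ER :=
  ER_add
    (Fin (dot (fun a => gf xk i a - AiT A i (fun r => lamk r - beta * resid A b xk r) a) z
          + / 2 * qform (P i) (vsub z (xk i))))
    (g i z).

(* Iterates are indexed by the history of chosen blocks and expectations are
   averages over histories.  One step of the algorithm combines the block
   descent lemma for f, the three-point inequality of the proximal block update
   and P_i >= L_i I + beta A_i^T A_i; averaging over the chosen block and using
   convexity of f, the potential
     Phi + |lambda - lambda*|^2 / (2 rho) + |x - x*|_P^2 / 2 + (beta - rho)/2 |r|^2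
   decreases in expectation up to the cross term <lambda - lambda*, r>, which
   telescopes through the dual update.  The resulting Lyapunov sequence decreases
   by at least (E Phi + rho/2 E|r|^2) / m per step and stays bounded below
   (E|lambda - lambda*|^2 obeys a contracting affine recursion), so E Phi and
   E|r|^2 tend to 0, and E|r| <= eps/2 + E|r|^2 / (2 eps). *)

From HB Require Import structures.
From Stdlib Require Import Reals Lra Lia FunctionalExtensionality.
From mathcomp Require Import ssreflect ssrfun ssrbool eqtype ssrnat seq fintype bigop.
Open Scope R_scope.

Lemma RplusA : associative Rplus. Proof. by move=> *; ring. Qed.
HB.instance Definition _ := Monoid.isComLaw.Build R 0 Rplus RplusA Rplus_comm Rplus_0_l.
HB.instance Definition _ := Monoid.isMulLaw.Build R 0 Rmult Rmult_0_l Rmult_0_r.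
HB.instance Definition _ :=
  Monoid.isAddLaw.Build R Rmult Rplus Rmult_plus_distr_r Rmult_plus_distr_l.

Section RealSums.
Context {k : nat}.
Implicit Types F G : 'I_k -> R.

Lemma big_Rle F G : (forall j, F j <= G j) ->
  \big[Rplus/0]_(j < k) F j <= \big[Rplus/0]_(j < k) G j.
Proof. by move=> FG; apply: (big_ind2 (fun a b => a <= b)) => // *; lra. Qed.

Lemma big_Rge0 F : (forall j, 0 <= F j) -> 0 <= \big[Rplus/0]_(j < k) F j.
Proof. by move=> F0; apply: (big_ind (fun a => 0 <= a)) => // *; lra. Qed.

Lemma big_Rminus F G :
  \big[Rplus/0]_(j < k) F j - \big[Rplus/0]_(j < k) G j = \big[Rplus/0]_(j < k) (F j - G j).
Proof.
rewrite [RHS](eq_bigr (fun j => F j + -1 * G j)) => [|j _]; last by ring.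
rewrite big_split -big_distrr /=; ring.
Qed.

Lemma big_Rconst c : \big[Rplus/0]_(j < k) c = INR k * c.
Proof.
rewrite big_const card_ord; elim: k => [|k' IH]; first by rewrite /=; ring.
by rewrite iterS IH S_INR; ring.
Qed.
End RealSums.

Section Vectors.
Context {d : nat}.
Implicit Types u v w : vec d.

Lemma dotC u v : dot u v = dot v u.
Proof. by rewrite /dot; apply: eq_bigr => j _; ring. Qed.

Lemma dot_ge0 u : 0 <= dot u u.
Proof. by apply: big_Rge0 => j; nra. Qed.

Lemma vnorm_ge0 u : 0 <= vnorm u.
Proof. exact: sqrt_pos. Qed.

Lemma vnorm_sq u : vnorm u * vnorm u = dot u u.
Proof. exact/sqrt_sqrt/dot_ge0. Qed.

Lemma dotDl u v w : dot (fun j => u j + v j) w = dot u w + dot v w.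
Proof. by rewrite /dot -big_split /=; apply: eq_bigr => j _; ring. Qed.

Lemma dotDr u v w : dot u (fun j => v j + w j) = dot u v + dot u w.
Proof. by rewrite dotC dotDl !(dotC u). Qed.

Lemma dotZl t u v : dot (fun j => t * u j) v = t * dot u v.
Proof. by rewrite /dot big_distrr /=; apply: eq_bigr => j _; ring. Qed.

Lemma dotZr t u v : dot u (fun j => t * v j) = t * dot u v.
Proof. by rewrite dotC dotZl dotC. Qed.

Lemma dot_subZl t u v w : dot (fun j => u j - t * v j) w = dot u w - t * dot v w.
Proof. by rewrite /dot big_distrr /= big_Rminus; apply: eq_bigr => j _; ring. Qed.

Lemma dot_subZr t u v w : dot w (fun j => u j - t * v j) = dot w u - t * dot w v.
Proof. by rewrite dotC dot_subZl !(dotC w). Qed.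

Lemma dot_vsubl u v w : dot (vsub u v) w = dot u w - dot v w.
Proof. by rewrite /dot big_Rminus; apply: eq_bigr => j _; rewrite /vsub; ring. Qed.

Lemma dot_vsubr u v w : dot u (vsub v w) = dot u v - dot u w.
Proof. by rewrite dotC dot_vsubl !(dotC u). Qed.

Lemma dot0r u : dot u (fun _ => 0) = 0.
Proof. by apply: big1 => j _; rewrite Rmult_0_r. Qed.

Lemma vnormZ t u : vnorm (fun j => t * u j) = Rabs t * vnorm u.
Proof.
rewrite /vnorm -sqrt_Rsqr_abs -sqrt_mult_alt; last exact: Rle_0_sqr.
by rewrite dotZl dotC dotZl /Rsqr Rmult_assoc.
Qed.

Lemma dot_le_of_vnorm_le K u v :
  0 < K -> vnorm u <= K * vnorm v -> dot u v <= K * dot v v.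
Proof.
move=> K0 uv.
have amgm : 2 * K * dot u v <= dot u u + K * K * dot v v.
  rewrite /dot !big_distrr -big_split /=; apply: big_Rle => j /=.
  have := pow2_ge_0 (u j - K * v j); nra.
have : dot u u <= K * K * dot v v.
  rewrite -!vnorm_sq; have := vnorm_ge0 u; nra.
nra.
Qed.
End Vectors.

Section Blocks.
Context {m : nat} {n : 'I_m -> nat}.
Implicit Types x y u v : BV m n.

Definition bscale t x : BV m n := fun i j => t * x i j.

Lemma BV_ext x y : (forall i j, x i j = y i j) -> x = y.
Proof.
move=> xy; apply: functional_extensionality_dep => i.
exact: functional_extensionality (xy i).
Qed.

Lemma bnorm_ge0 x : 0 <= bnorm x.
Proof. exact: sqrt_pos. Qed.

Lemma bdotZr t u v : bdot u (bscale t v) = t * bdot u v.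
Proof.
by rewrite /bdot big_distrr /=; apply: eq_bigr => i _; rewrite dotZr.
Qed.

Lemma bnormZ t x : bnorm (bscale t x) = Rabs t * bnorm x.
Proof.
rewrite /bnorm -sqrt_Rsqr_abs -sqrt_mult_alt; last exact: Rle_0_sqr.
congr sqrt; rewrite bdotZr /bdot big_distrr /=; rewrite /Rsqr big_distrr /=.
by apply: eq_bigr => i _; rewrite dotZl; ring.
Qed.

Lemma bdot_bsubC u x y : bdot u (bsub y x) = - bdot u (bsub x y).
Proof.
have -> : forall r, - r = -1 * r by move=> r; ring.
rewrite /bdot big_distrr /=.
apply: eq_bigr => i _; rewrite -dotZl; apply: eq_bigr => j _; rewrite /bsub; ring.
Qed.

Lemma bdot_Ublk u y i : bdot u (Ublk i y) = dot (u i) (y i).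
Proof.
rewrite /bdot (bigD1 i) //= /Ublk eqxx big1 ?Rplus_0_r // => j /negPf ->.
exact: dot0r.
Qed.
End Blocks.

Section BlockOperator.
Context {m : nat} {n : 'I_m -> nat} {q : nat}.
Variables (A : Amat m n q) (b : vec q).

Lemma Aiz_vsub i (u v : vec (n i)) : Aiz A i (vsub u v) = vsub (Aiz A i u) (Aiz A i v).
Proof.
apply: functional_extensionality => r; rewrite /Aiz /vsub big_Rminus.
by apply: eq_bigr => a _; ring.
Qed.

Lemma dot_AiT i w (v : vec (n i)) : dot (AiT A i w) v = dot w (Aiz A i v).
Proof.
rewrite /dot /AiT /Aiz; under eq_bigr => a _ do rewrite Rmult_comm big_distrr /=.
rewrite exchange_big; apply: eq_bigr => r _ /=; rewrite big_distrr /=.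
by apply: eq_bigr => a _; ring.
Qed.

Lemma sum_Aiz_vsub (x y : BV m n) r :
  \big[Rplus/0]_(i < m) Aiz A i (vsub (x i) (y i)) r = resid A b x r - resid A b y r.
Proof.
rewrite /resid (_ : forall a c e, a - e - (c - e) = a - c) => [|*]; last by ring.
by rewrite big_Rminus; apply: eq_bigr => i _; rewrite Aiz_vsub.
Qed.
End BlockOperator.

Lemma le_of_small_perturbations a b K :
  (forall t, 0 < t < 1 -> a <= b + t * K) -> a <= b.
Proof.
move=> ab; apply: Rle_plus_epsilon => eps eps0.
have K1 : 0 < Rabs K + 1 by have := Rabs_pos K; lra.
set t := Rmin (1 / 2) (eps / (Rabs K + 1)).
have t0 : 0 < t by apply: Rmin_pos; [lra | apply: Rdiv_lt_0_compat].
have t1 : t <= 1 / 2 := Rmin_l _ _.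
have tK : t * (Rabs K + 1) <= eps.
  apply: (Rle_trans _ (eps / (Rabs K + 1) * (Rabs K + 1))); last by right; field; lra.
  by apply: Rmult_le_compat_r; [lra | exact: Rmin_r].
have := ab t (conj t0 (ltac:(lra) : t < 1)); have := Rle_abs K; nra.
Qed.

Lemma exists_small_scale delta c :
  0 < delta -> 0 <= c -> exists t, 0 < t <= 1 /\ t * c < delta.
Proof.
move=> delta0 c0; set t := Rmin 1 (delta / (2 * (c + 1))).
have t0 : 0 < t by apply: Rmin_pos; [lra | apply: Rdiv_lt_0_compat; lra].
have tc : t * (2 * (c + 1)) <= delta.
  apply: (Rle_trans _ (delta / (2 * (c + 1)) * (2 * (c + 1)))); last by right; field; lra.
  by apply: Rmult_le_compat_r; [lra | exact: Rmin_r].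
by exists t; split; [split => //; exact: Rmin_l | nra].
Qed.

Definition bform {d} (M : 'I_d -> 'I_d -> R) (u v : vec d) : R :=
  \big[Rplus/0]_(a < d) \big[Rplus/0]_(c < d) (u a * M a c * v c).

Section QuadraticForms.
Context {d : nat} {M : 'I_d -> 'I_d -> R}.
Hypothesis M_sym : forall a c, M a c = M c a.

Lemma bformC u v : bform M v u = bform M u v.
Proof. by rewrite /bform exchange_big; do 2!apply: eq_bigr => ? _; rewrite M_sym; ring. Qed.

Lemma qformD u v t :
  qform M (fun j => u j + t * v j) = qform M u + 2 * t * bform M u v + t * t * qform M v.
Proof.
rewrite (_ : 2 * t * bform M u v = t * bform M u v + t * bform M v u); last by rewrite bformC; ring.
rewrite /qform /bform !big_distrr -!big_split; apply: eq_bigr => a _ /=.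
by rewrite !big_distrr -!big_split; apply: eq_bigr => c _ /=; ring.
Qed.

Lemma qform_vsubC u v : qform M (vsub u v) = qform M (vsub v u).
Proof. by do 2!apply: eq_bigr => ? _; rewrite /vsub; ring. Qed.

Lemma prox_three_point {G : vec d -> ER} {c xk z w : vec d} {Gz Gw : R} :
  convexER G -> G z = Fin Gz -> G w = Fin Gw ->
  (forall w', ER_le (ER_add (Fin (dot c z + / 2 * qform M (vsub z xk))) (G z))
                    (ER_add (Fin (dot c w' + / 2 * qform M (vsub w' xk))) (G w'))) ->
  Gz + dot c z + / 2 * qform M (vsub z xk) + / 2 * qform M (vsub z w)
    <= Gw + dot c w + / 2 * qform M (vsub w xk).
Proof.
move=> G_conv Gz_fin Gw_fin z_min.
(* First-order optimality of z, tested along the segment from z towards w. *)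
have optimality : Gz - Gw <= dot c (vsub w z) + bform M (vsub z xk) (vsub w z).
  apply: (le_of_small_perturbations _ _ (/ 2 * qform M (vsub w z))) => t t01.
  have := G_conv w z t t01; move: (z_min (vlin t w z)); rewrite Gz_fin Gw_fin.
  case: (G (vlin t w z)) => [Gt|] //= z_le conv_le.
  rewrite (_ : vsub (vlin t w z) xk = (fun j => vsub z xk j + t * vsub w z j)) in z_le;
    last by apply: functional_extensionality => j; rewrite /vsub /vlin; ring.
  rewrite (_ : vlin t w z = (fun j => t * w j + (1 - t) * z j)) // in z_le.
  rewrite qformD dotDr !dotZr in z_le.
  by rewrite dot_vsubr; apply: (Rmult_le_reg_l t); lra.
have := qformD (vsub z xk) (vsub w z) 1.
rewrite (_ : (fun j => vsub z xk j + 1 * vsub w z j) = vsub w xk);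
  last by apply: functional_extensionality => j; rewrite /vsub; ring.
rewrite (qform_vsubC z w) dot_vsubr in optimality *; lra.
Qed.
End QuadraticForms.

Lemma quadratic_derivative K c t :
  derivable_pt_lim (fun s => s * K + c * (s * s)) t (K + 2 * c * t).
Proof.
have dK := derivable_pt_lim_scal id K t 1 (derivable_pt_lim_id t).
have dsq := derivable_pt_lim_mult id id t 1 1 (derivable_pt_lim_id t) (derivable_pt_lim_id t).
have := derivable_pt_lim_plus _ _ t _ _ dK (derivable_pt_lim_scal _ c t _ dsq).
rewrite (_ : K * 1 + c * (1 * id t + id t * 1) = K + 2 * c * t); last by rewrite /id; ring.
by apply: derivable_pt_lim_ext => s; rewrite /plus_fct /mult_real_fct /mult_fct /id; ring.
Qed.

Section Differentiable.
Context {m : nat} {n : 'I_m -> nat}.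
Context {f : BV m n -> R} {gf : BV m n -> BV m n}.
Hypothesis f_grad : is_gradient f gf.

Lemma convex_gradient_ineq x y :
  convexR f -> f x + bdot (gf x) (bsub y x) <= f y.
Proof.
move=> f_conv; set h := bsub y x.
suff: bdot (gf x) h <= f y - f x by lra.
apply: (le_of_small_perturbations _ _ (bnorm h)) => eps [eps0 _].
have [delta [delta0 near_x]] := f_grad x eps eps0.
have [t [[t0 t1] th]] := exists_small_scale delta (bnorm h) delta0 (bnorm_ge0 h).
have := near_x (bscale t h); rewrite bnormZ Rabs_pos_eq; last lra.
have -> : badd x (bscale t h) = (fun i j => t * y i j + (1 - t) * x i j).
  by apply: BV_ext => i j; rewrite /badd /bscale /h /bsub; ring.
move=> /(_ th); rewrite bdotZr -Rabs_Ropp => /(Rle_trans _ _ _ (Rle_abs _)).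
have := f_conv y x t (conj (Rlt_le _ _ t0) t1).
have := bnorm_ge0 h; nra.
Qed.

Lemma directional_derivative x v t :
  derivable_pt_lim (fun s => f (badd x (bscale s v))) t
    (bdot (gf (badd x (bscale t v))) v).
Proof.
move=> eps eps0; set z := badd x (bscale t v); set c := bnorm v + 1.
have c0 : 0 < c by have := bnorm_ge0 v; rewrite /c; lra.
have eps' : 0 < eps / (2 * c) by apply: Rdiv_lt_0_compat; lra.
have [delta [delta0 near_z]] := f_grad z _ eps'.
have delta' : 0 < delta / c by apply: Rdiv_lt_0_compat.
exists (mkposreal _ delta') => h h0 /= hdelta.
have -> : badd x (bscale (t + h) v) = badd z (bscale h v).
  by apply: BV_ext => i j; rewrite /z /badd /bscale; ring.
have hv : Rabs h * bnorm v < delta.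
  have dc : delta / c * c = delta by field; lra.
  have : Rabs h * c < delta by rewrite -dc; apply: Rmult_lt_compat_r.
  have := Rabs_pos h; rewrite /c; nra.
have := near_z (bscale h v); rewrite bnormZ bdotZr => /(_ hv) near.
have habs : 0 < Rabs h by apply: Rabs_pos_lt.
rewrite (_ : (f (badd z (bscale h v)) - f z) / h - bdot (gf z) v =
             (f (badd z (bscale h v)) - f z - h * bdot (gf z) v) * / h); last by field.
rewrite Rabs_mult Rabs_inv; apply: (Rmult_lt_reg_r (Rabs h)) => //.
rewrite Rmult_assoc Rinv_l ?Rmult_1_r; last lra.
apply: (Rle_lt_trans _ _ _ near).
have ec : eps / (2 * c) * (2 * c) = eps by field; lra.
have := bnorm_ge0 v; rewrite /c in eps' ec *; nra.
Qed.

Lemma block_descent {i : 'I_m} {Li : R} :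
  0 < Li ->
  (forall x y : BV m n, vnorm (vsub (gf (badd x (Ublk i y)) i) (gf x i)) <= Li * vnorm (y i)) ->
  forall x y : BV m n,
  f (badd x (Ublk i y)) <= f x + dot (gf x i) (y i) + Li / 2 * dot (y i) (y i).
Proof.
move=> Li0 Lip x y; set K := dot (gf x i) (y i); set Y := dot (y i) (y i).
(* Mean value theorem for f along the segment, minus the quadratic model. *)
set psi := fun t => f (badd x (bscale t (Ublk i y))) - (t * K + Li / 2 * Y * (t * t)).
set dpsi := fun t => bdot (gf (badd x (bscale t (Ublk i y)))) (Ublk i y) - (K + 2 * (Li / 2 * Y) * t).
have [c [mvt [c0 c1]]] : exists c, psi 1 - psi 0 = dpsi c * (1 - 0) /\ 0 < c < 1.
  by apply: MVT_cor2 => [|t _]; [lra | apply: derivable_pt_lim_minus;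
     [exact: directional_derivative | exact: quadratic_derivative]].
have dpsi_le0 : dpsi c <= 0.
  rewrite /dpsi bdot_Ublk.
  have -> : badd x (bscale c (Ublk i y)) = badd x (Ublk i (bscale c y)).
    by apply: BV_ext => j a; rewrite /badd /bscale /Ublk; case: (j == i); ring.
  suff : dot (vsub (gf (badd x (Ublk i (bscale c y))) i) (gf x i)) (y i) <= Li * c * Y.
    by rewrite dot_vsubl -/K; lra.
  apply: dot_le_of_vnorm_le; first nra.
  by have := Lip x (bscale c y); rewrite /bscale vnormZ Rabs_pos_eq; lra.
have -> : badd x (Ublk i y) = badd x (bscale 1 (Ublk i y)).
  by apply: BV_ext => j a; rewrite /badd /bscale Rmult_1_l.
have {2}-> : x = badd x (bscale 0 (Ublk i y)).
  by apply: BV_ext => j a; rewrite /badd /bscale Rmult_0_l Rplus_0_r.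
rewrite /psi in mvt; nra.
Qed.
End Differentiable.

Lemma affine_recursion_bound (a : nat -> R) theta c :
  0 <= theta < 1 -> (forall k, a k.+1 <= theta * a k + c) ->
  forall k, a k <= Rmax (a 0%N) (c / (1 - theta)).
Proof.
move=> theta01 rec; set M := Rmax _ _.
have cM : c <= (1 - theta) * M.
  apply: (Rle_trans _ ((1 - theta) * (c / (1 - theta)))); first by right; field; lra.
  by apply: Rmult_le_compat_l; [lra | exact: Rmax_r].
elim=> [|k IH]; first exact: Rmax_l.
by have := rec k; nra.
Qed.

Lemma Lyapunov_cv0 (W u : nat -> R) lb :
  (forall k, W k.+1 + u k <= W k) -> (forall k, 0 <= u k) -> (forall k, lb <= W k) ->
  Un_cv u 0.
Proof.
move=> decr u0 W_lb.
have [l Wl] : {l | Un_cv W l}.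
  apply: decreasing_cv => [k | ]; first by have := decr k; have := u0 k; lra.
  by exists (- lb) => _ [k ->]; rewrite /opp_seq; have := W_lb k; lra.
have := CV_minus _ _ _ _ Wl (CV_shift' W 1 l Wl); rewrite Rminus_diag.
move=> Wdiff eps eps0; have [N HN] := Wdiff eps eps0.
exists N => k kN; have := HN k kN; rewrite /Rdist !Rminus_0_r Nat.add_1_r => dW.
rewrite Rabs_pos_eq; last exact: u0.
have := decr k; have := Rle_abs (W k - W k.+1); lra.
Qed.

Lemma Un_cv0_squeeze (a u : nat -> R) c :
  0 < c -> (forall k, 0 <= a k) -> (forall k, c * a k <= u k) -> Un_cv u 0 -> Un_cv a 0.
Proof.
move=> c0 a0 au u_cv eps eps0; have [N HN] := u_cv (c * eps) (Rmult_lt_0_compat _ _ c0 eps0).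
exists N => k kN; have := HN k kN; rewrite /Rdist !Rminus_0_r Rabs_pos_eq ?(Rabs_pos_eq (a k)) //.
  by have := au k; nra.
by have := au k; have := a0 k; nra.
Qed.

Lemma ER_cv_Fin (u : nat -> ER) (v : nat -> R) l :
  (forall k, u k = Fin (v k)) -> Un_cv v l -> ER_cv u l.
Proof.
move=> uv v_cv eps eps0; have [N HN] := v_cv eps eps0.
by exists N => k /leP kN; exists (v k); split; [exact: uv | exact: HN].
Qed.

Lemma sqrt_le_amgm y e : 0 <= y -> 0 < e -> sqrt y <= e / 2 + y / (2 * e).
Proof.
move=> y0 e0; have := sqrt_sqrt y y0; have := sqrt_pos y.
have -> : e / 2 + y / (2 * e) = (e * e + y) / (2 * e) by field; lra.
move=> sy0 syy; apply: (Rmult_le_reg_r (2 * e)); first lra.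
rewrite /Rdiv Rmult_assoc Rinv_l ?Rmult_1_r; last lra.
have := pow2_ge_0 (sqrt y - e); rewrite /pow; nra.
Qed.

Lemma ER_addA : associative ER_add.
Proof. by case=> [a|] [b|] [c|] //=; rewrite RplusA. Qed.
Lemma ER_addC : commutative ER_add.
Proof. by case=> [a|] [b|] //=; rewrite Rplus_comm. Qed.
Lemma ER_add0 : left_id (Fin 0) ER_add.
Proof. by case=> [a|] //=; rewrite Rplus_0_l. Qed.
HB.instance Definition _ := Monoid.isComLaw.Build ER (Fin 0) ER_add ER_addA ER_addC ER_add0.

Lemma big_ER_Fin (I : finType) (F : I -> R) :
  \big[ER_add/Fin 0]_i Fin (F i) = Fin (\big[Rplus/0]_i F i).
Proof. by apply: (big_rec2 (fun a b => a = Fin b)) => // i a b _ ->. Qed.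

Lemma big_ER_finite {I : finType} {F : I -> ER} :
  \big[ER_add/Fin 0]_i F i <> PInf -> forall i, exists v, F i = Fin v.
Proof.
move=> fin i; case E: (F i) => [v|]; first by exists v.
by case: fin; rewrite (bigD1 i) //= E.
Qed.

(* The value 0 at +oo is junk: [ER_val] is only applied to finite values. *)
Definition ER_val (a : ER) : R := if a is Fin v then v else 0.

Section Expectation.
Context {m : nat}.
Implicit Types (h : seq 'I_m -> R) (p : seq 'I_m).

Definition avg h (s : seq 'I_m) : R := / INR m * \big[Rplus/0]_(i < m) h (rcons s i).

Lemma esum_tower k p h : esum k.+1 p h = esum k p (avg h).
Proof.
elim: k p => [|k IH] p //.
transitivity (/ INR m * \big[Rplus/0]_(i < m) esum k.+1 (rcons p i) h) => //.
by under eq_bigr => i _ do rewrite IH.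
Qed.

Lemma esumD k p h1 h2 : esum k p (fun s => h1 s + h2 s) = esum k p h1 + esum k p h2.
Proof.
elim: k p => [|k IH] p //=.
by under eq_bigr => i _ do rewrite IH; rewrite big_split /=; ring.
Qed.

Lemma esumZ k p a h : esum k p (fun s => a * h s) = a * esum k p h.
Proof.
elim: k p => [|k IH] p //=.
by under eq_bigr => i _ do rewrite IH; rewrite -big_distrr /=; ring.
Qed.

Lemma esum_le k p h1 h2 : (forall s, h1 s <= h2 s) -> esum k p h1 <= esum k p h2.
Proof.
move=> h12; elim: k p => [|k IH] p /=; first exact: h12.
apply: Rmult_le_compat_l; last exact: big_Rle.
by case: m => [|m']; [rewrite Rinv_0; lra | apply/Rlt_le/Rinv_0_lt_compat/lt_0_INR; lia].
Qed.

Hypothesis m_gt0 : (0 < m)%N.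

Lemma esum_const k p c : esum k p (fun _ => c) = c.
Proof.
elim: k p => [|k IH] p //=.
under eq_bigr => i _ do rewrite IH; rewrite big_Rconst.
by field; apply: not_0_INR => m0; move: m_gt0; rewrite m0.
Qed.

Lemma esum_ge0 k p h : (forall s, 0 <= h s) -> 0 <= esum k p h.
Proof. by move=> h0; rewrite -(esum_const k p 0); exact: esum_le. Qed.

Lemma Expect_sqrt_cv0 h :
  (forall s, 0 <= h s) -> Un_cv (fun k => Expect k h) 0 ->
  Un_cv (fun k => Expect k (fun s => sqrt (h s))) 0.
Proof.
move=> h0 h_cv eps eps0; have [N HN] := h_cv (eps * eps) (Rmult_lt_0_compat _ _ eps0 eps0).
exists N => k kN; have := HN k kN; rewrite /Rdist !Rminus_0_r /Expect.
rewrite (Rabs_pos_eq (esum _ _ h)) ?Rabs_pos_eq; last exact: esum_ge0.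
  2: by apply: esum_ge0 => s; exact: sqrt_pos.
have : esum k [::] (fun s => sqrt (h s)) <= esum k [::] (fun s => eps / 2 + / (2 * eps) * h s).
  apply: esum_le => s; by rewrite Rmult_comm; exact: sqrt_le_amgm.
rewrite esumD esum_const esumZ => sqrt_le Eh.
have : / (2 * eps) * esum k [::] h < / (2 * eps) * (eps * eps).
  by apply: Rmult_lt_compat_l => //; apply: Rinv_0_lt_compat; lra.
have -> : / (2 * eps) * (eps * eps) = eps / 2 by field; lra.
lra.
Qed.
End Expectation.

Lemma esumER_Fin {m : nat} k (p : seq 'I_m) h :
  esumER k p (fun s => Fin (h s)) = Fin (esum k p h).
Proof.
elim: k p => [|k IH] p //=.
by under eq_bigr => i _ do rewrite IH; rewrite big_ER_Fin.
Qed.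

Section RandomizedPrimalDual.
Context {m : nat} {n : 'I_m -> nat} {q : nat}.
Variables (A : Amat m n q) (b : vec q) (f : BV m n -> R) (gf : BV m n -> BV m n)
  (g : forall i : 'I_m, vec (n i) -> ER) (L : 'I_m -> R) (beta rho : R)
  (P : forall i : 'I_m, 'I_(n i) -> 'I_(n i) -> R) (x0 : BV m n)
  (xs : seq 'I_m -> BV m n) (lam : seq 'I_m -> vec q) (xstar : BV m n) (lamstar : vec q).

Hypothesis m_gt0 : (0 < m)%N.
Hypothesis f_conv : convexR f.
Hypothesis f_grad : is_gradient f gf.
Hypothesis g_conv : forall i, convexER (g i).
Hypothesis xstar_feas : forall r, resid A b xstar r = 0.
Hypothesis xstar_fin : Fobj f g xstar <> PInf.
Hypothesis saddle : forall x, ER_le (Fin 0) (Phi f g A b x xstar lamstar).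
Hypothesis L_gt0 : forall i, 0 < L i.
Hypothesis gf_block_Lipschitz : forall i x y,
  vnorm (vsub (gf (badd x (Ublk i y)) i) (gf x i)) <= L i * vnorm (y i).
Hypothesis rho_gt0 : 0 < rho.
Hypothesis rho_le : rho <= beta / INR m.
Hypothesis P_sym : forall i a c, P i a c = P i c a.
Hypothesis P_psd : forall i z, 0 <= qform (P i) z.
Hypothesis P_ge : forall i z,
  L i * dot z z + beta * dot (Aiz A i z) (Aiz A i z) <= qform (P i) z.
Hypothesis x0_fin : Fobj f g x0 <> PInf.
Hypothesis xs_nil : xs [::] = x0.
Hypothesis xs_keep : forall s i j, j != i -> xs (rcons s i) j = xs s j.
Hypothesis xs_argmin : forall s i w,
  ER_le (subobj A b gf g P beta (xs s) (lam s) i (xs (rcons s i) i))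
        (subobj A b gf g P beta (xs s) (lam s) i w).
Hypothesis lam_step : forall s i,
  lam (rcons s i) = (fun r => lam s r - rho * resid A b (xs (rcons s i)) r).

Definition gval i (u : vec (n i)) : R := ER_val (g i u).
Definition Gsum (x : BV m n) : R := \big[Rplus/0]_(i < m) gval i (x i).
Definition Fstar : R := f xstar + Gsum xstar.

Lemma Fobj_fin x : Fobj f g x <> PInf -> forall i, g i (x i) = Fin (gval i (x i)).
Proof.
move=> fin i; have fin_g : \big[ER_add/Fin 0]_j g j (x j) <> PInf.
  by move=> E; apply: fin; rewrite /Fobj E.
by have [v /= E] := big_ER_finite fin_g i; rewrite /gval E.
Qed.

Lemma Fobj_Gsum x : Fobj f g x <> PInf -> Fobj f g x = Fin (f x + Gsum x).
Proof.
by move=> fin; rewrite /Fobj; under eq_bigr => i _ do rewrite (Fobj_fin _ fin i); rewrite big_ER_Fin.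
Qed.

Lemma g_xs_fin s i : g i (xs s i) = Fin (gval i (xs s i)).
Proof.
elim/last_ind: s i => [|s j IH] i; first by rewrite xs_nil; exact: Fobj_fin.
case: (eqVneq i j) => [-> | ij]; last by rewrite xs_keep.
move: (xs_argmin s j (xs s j)); rewrite /subobj IH /gval.
by case: (g j (xs (rcons s j) j)).
Qed.

Lemma Fobj_xs s : Fobj f g (xs s) = Fin (f (xs s) + Gsum (xs s)).
Proof.
by rewrite /Fobj; under eq_bigr => i _ do rewrite g_xs_fin; rewrite big_ER_Fin.
Qed.

Definition res s : vec q := resid A b (xs s).
Definition gap s : R := f (xs s) + Gsum (xs s) - Fstar - dot lamstar (res s).
Definition xdist s : R := \big[Rplus/0]_(i < m) qform (P i) (vsub (xs s i) (xstar i)).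
Definition lerr s : vec q := vsub (lam s) lamstar.
Definition ldist s : R := dot (lerr s) (lerr s).
Definition rsq s : R := dot (res s) (res s).
Definition lcross s : R := dot (lerr s) (res s).

Lemma Phi_xs s : Phi f g A b (xs s) xstar lamstar = Fin (gap s).
Proof. by rewrite /Phi Fobj_Gsum // Fobj_xs /gap /Fstar /res /=; congr Fin; ring. Qed.

Lemma gap_ge0 s : 0 <= gap s.
Proof. by have := saddle (xs s); rewrite Phi_xs. Qed.

Lemma xs_rcons s i : xs (rcons s i) = badd (xs s) (Ublk i (bsub (xs (rcons s i)) (xs s))).
Proof.
apply: BV_ext => j a; rewrite /badd /Ublk /bsub.
by case E: (j == i); [|rewrite xs_keep ?E //]; ring.
Qed.

Lemma sum_rcons (F : forall i, vec (n i) -> R) s i :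
  \big[Rplus/0]_(j < m) F j (xs (rcons s i) j) =
  \big[Rplus/0]_(j < m) F j (xs s j) - F i (xs s i) + F i (xs (rcons s i) i).
Proof.
rewrite (bigD1 i) // [in RHS](bigD1 i) //=.
by rewrite (eq_bigr (fun j => F j (xs s j))) => [|j ji]; [ring | rewrite xs_keep].
Qed.

Definition rinc s i : vec q := Aiz A i (vsub (xs (rcons s i) i) (xs s i)).

Lemma res_rcons s i : res (rcons s i) = (fun r => res s r + rinc s i r).
Proof.
apply: functional_extensionality => r; rewrite /rinc Aiz_vsub /vsub /res /resid.
by rewrite (sum_rcons (fun j u => Aiz A j u r)) /=; ring.
Qed.

Lemma lerr_rcons s i : lerr (rcons s i) = (fun r => lerr s r - rho * res (rcons s i) r).
Proof. apply: functional_extensionality => r; by rewrite /lerr /vsub /res lam_step /=; ring. Qed.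

(* The multiplier estimate lambda^k - beta r^k of the linearized x-update. *)
Definition lam_hat s : vec q := fun r => lam s r - beta * res s r.

Lemma primal_block_step s i :
  f (xs (rcons s i)) + gval i (xs (rcons s i) i) - gval i (xstar i)
    + / 2 * qform (P i) (vsub (xs (rcons s i) i) (xstar i))
    + beta / 2 * dot (rinc s i) (rinc s i)
  <= f (xs s) + dot (gf (xs s) i) (vsub (xstar i) (xs s i))
     + dot (lam_hat s) (Aiz A i (vsub (xs (rcons s i) i) (xstar i)))
     + / 2 * qform (P i) (vsub (xs s i) (xstar i)).
Proof.
have descent := block_descent f_grad (L_gt0 i) (gf_block_Lipschitz i) (xs s)
  (bsub (xs (rcons s i)) (xs s)).
rewrite -xs_rcons in descent.
have prox := prox_three_point (P_sym i) (g_conv i) (g_xs_fin (rcons s i) i)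
  (Fobj_fin _ xstar_fin i) (xs_argmin s i).
have P_d := P_ge i (vsub (xs (rcons s i) i) (xs s i)); rewrite -/(rinc s i) in P_d.
have dot_c v : dot (fun a => gf (xs s) i a - AiT A i (lam_hat s) a) v
               = dot (gf (xs s) i) v - dot (lam_hat s) (Aiz A i v).
  by rewrite -dot_AiT -dot_vsubl.
rewrite !dot_c (qform_vsubC (xstar i)) in prox.
rewrite (_ : bsub _ _ i = vsub (xs (rcons s i) i) (xs s i)) // in descent.
rewrite [dot (gf _ _) _]dot_vsubr in descent.
rewrite [dot (gf _ _) _]dot_vsubr [in dot (lam_hat s) _]Aiz_vsub [dot (lam_hat s) _]dot_vsubr.
lra.
Qed.

Lemma lcross_rcons s i :
  lcross (rcons s i) = (ldist s - ldist (rcons s i)) / (2 * rho) - rho / 2 * rsq (rcons s i).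
Proof.
rewrite /lcross /ldist /rsq lerr_rcons !dot_subZl !dot_subZr (dotC (res _) (lerr s)).
by field; lra.
Qed.

Definition lyap s : R :=
  gap s + / (2 * rho) * ldist s + / 2 * xdist s + (beta - rho) / 2 * rsq s.

Definition block_gap s i : R :=
  dot (gf (xs s) i) (vsub (xs s i) (xstar i)) + gval i (xs s i) - gval i (xstar i)
  - dot (lam_hat s) (Aiz A i (vsub (xs s i) (xstar i))).

Lemma gap_rcons s i :
  gap (rcons s i) = f (xs (rcons s i)) + Gsum (xs s) - gval i (xs s i)
    + gval i (xs (rcons s i) i) - Fstar - dot lamstar (res s) - dot lamstar (rinc s i).
Proof. by rewrite /gap /Gsum sum_rcons res_rcons dotDr; ring. Qed.

Lemma xdist_rcons s i :
  xdist (rcons s i) = xdist s - qform (P i) (vsub (xs s i) (xstar i))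
    + qform (P i) (vsub (xs (rcons s i) i) (xstar i)).
Proof. by rewrite /xdist (sum_rcons (fun j u => qform (P j) (vsub u (xstar j)))). Qed.

Lemma rsq_rcons s i : rsq (rcons s i) = rsq s + 2 * dot (res s) (rinc s i) + dot (rinc s i) (rinc s i).
Proof.
rewrite /rsq res_rcons dotDl [dot (res s) _]dotDr [dot (rinc s i) _]dotDr (dotC (rinc s i)).
ring.
Qed.

Lemma ldist_rcons s i :
  / (2 * rho) * ldist (rcons s i) =
  / (2 * rho) * ldist s - lcross s - dot (lerr s) (rinc s i) + rho / 2 * rsq (rcons s i).
Proof.
have lcross' : lcross (rcons s i) = lcross s + dot (lerr s) (rinc s i) - rho * rsq (rcons s i).
  rewrite {1}/lcross lerr_rcons dot_subZl -/(rsq _) res_rcons dotDr.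
  by rewrite /lcross /lerr dotC; ring.
by have := lcross_rcons s i; rewrite lcross' /Rdiv; lra.
Qed.

Lemma lyap_rcons s i :
  lyap (rcons s i) <=
  gap s - lcross s + / (2 * rho) * ldist s + / 2 * xdist s + beta / 2 * rsq s - block_gap s i.
Proof.
have step := primal_block_step s i.
have hat_split : dot (lam_hat s) (Aiz A i (vsub (xs (rcons s i) i) (xstar i)))
    = dot (lam_hat s) (Aiz A i (vsub (xs s i) (xstar i))) + dot (lam_hat s) (rinc s i).
  by rewrite /rinc !Aiz_vsub !dot_vsubr; ring.
have hat_rinc : dot (lam_hat s) (rinc s i) = dot (lam s) (rinc s i) - beta * dot (res s) (rinc s i).
  by rewrite dot_subZl.
have err_rinc : dot (lerr s) (rinc s i) = dot (lam s) (rinc s i) - dot lamstar (rinc s i).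
  by rewrite dot_vsubl.
have gf_opp : dot (gf (xs s) i) (vsub (xstar i) (xs s i))
    = - dot (gf (xs s) i) (vsub (xs s i) (xstar i)) by rewrite !dot_vsubr; ring.
rewrite /lyap gap_rcons ldist_rcons xdist_rcons rsq_rcons /block_gap [gap s]/gap.
lra.
Qed.

Lemma sum_dot_Aiz w x :
  \big[Rplus/0]_(i < m) dot w (Aiz A i (vsub (x i) (xstar i))) = dot w (resid A b x).
Proof.
rewrite /dot exchange_big; apply: eq_bigr => r _ /=.
by rewrite -big_distrr /= (sum_Aiz_vsub _ b) xstar_feas Rminus_0_r.
Qed.

Lemma sum_block_gap_ge s : gap s - lcross s + beta * rsq s <= \big[Rplus/0]_(i < m) block_gap s i.
Proof.
have conv := convex_gradient_ineq f_grad (xs s) xstar f_conv.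
rewrite bdot_bsubC in conv.
rewrite /block_gap -!big_Rminus big_split /= sum_dot_Aiz -/(res s) -!/(Gsum _).
rewrite (_ : \big[Rplus/0]_(i < m) _ = bdot (gf (xs s)) (bsub (xs s) xstar)) //.
rewrite /lam_hat dot_subZl -/(rsq s) /lcross /lerr dot_vsubl /gap /Fstar.
lra.
Qed.

Lemma INR_m_gt0 : 0 < INR m.
Proof. by apply: lt_0_INR; apply/ltP. Qed.

Definition theta : R := 1 - / INR m.

Lemma avg_lyap_le s :
  avg lyap s <= theta * gap s + (- theta) * lcross s + / (2 * rho) * ldist s
                + / 2 * xdist s + (beta / 2 - beta / INR m) * rsq s.
Proof.
have m0 := INR_m_gt0.
have sum_le : \big[Rplus/0]_(i < m) lyap (rcons s i) <=
    INR m * (gap s - lcross s + / (2 * rho) * ldist s + / 2 * xdist s + beta / 2 * rsq s)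
    - \big[Rplus/0]_(i < m) block_gap s i.
  by rewrite -big_Rconst big_Rminus; apply: big_Rle => i; exact: lyap_rcons.
have inv_m0 : 0 <= / INR m by apply/Rlt_le/Rinv_0_lt_compat.
have := Rmult_le_compat_l _ _ _ inv_m0 sum_le.
have := Rmult_le_compat_l _ _ _ inv_m0 (sum_block_gap_ge s).
rewrite /avg /theta /Rdiv Rmult_minus_distr_l -Rmult_assoc Rinv_l; lra.
Qed.

Lemma avg_lcross s :
  avg lcross s = / (2 * rho) * ldist s + (- / (2 * rho)) * avg ldist s + (- (rho / 2)) * avg rsq s.
Proof.
have m0 := INR_m_gt0.
rewrite /avg; under eq_bigr => i _ do rewrite lcross_rcons.
rewrite (eq_bigr (fun i => / (2 * rho) * ldist s + (- / (2 * rho)) * ldist (rcons s i)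
                           + (- (rho / 2)) * rsq (rcons s i))) => [|i _]; last by rewrite /Rdiv; ring.
by rewrite !big_split -!big_distrr /= big_Rconst; field; lra.
Qed.

Definition Egap k := Expect k gap.
Definition Eldist k := Expect k ldist.
Definition Exdist k := Expect k xdist.
Definition Ersq k := Expect k rsq.
Definition Elcross k := Expect k lcross.

Lemma Expect_lyap_step k :
  Egap k.+1 + / (2 * rho) * Eldist k.+1 + / 2 * Exdist k.+1 + (beta - rho) / 2 * Ersq k.+1
  <= theta * Egap k + (- theta) * Elcross k + / (2 * rho) * Eldist k + / 2 * Exdist k
     + (beta / 2 - beta / INR m) * Ersq k.
Proof.
have lyapE : Expect k.+1 lyap = Egap k.+1 + / (2 * rho) * Eldist k.+1 + / 2 * Exdist k.+1
    + (beta - rho) / 2 * Ersq k.+1 by rewrite /Expect /lyap 3!esumD 3!esumZ.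
rewrite -lyapE /Expect esum_tower.
rewrite /Egap /Elcross /Eldist /Exdist /Ersq /Expect -5!esumZ -4!esumD.
exact: esum_le avg_lyap_le.
Qed.

Lemma Expect_lcross_step k :
  Elcross k.+1 = / (2 * rho) * Eldist k - / (2 * rho) * Eldist k.+1 - rho / 2 * Ersq k.+1.
Proof.
rewrite /Elcross /Eldist /Ersq /Expect !esum_tower.
rewrite (functional_extensionality _ _ avg_lcross) 2!esumD 3!esumZ; ring.
Qed.

Lemma theta_bounds : 0 <= theta < 1.
Proof.
have m1 : 1 <= INR m by apply: (le_INR 1); apply/leP.
have := Rinv_0_lt_compat _ INR_m_gt0; have := Rinv_le_contravar _ _ Rlt_0_1 m1.
by rewrite /theta Rinv_1; lra.
Qed.

Lemma rho_le_beta : rho <= beta.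
Proof.
have := rho_le; have := theta_bounds; rewrite /theta /Rdiv.
have := Rinv_0_lt_compat _ INR_m_gt0; nra.
Qed.

Lemma Egap_ge0 k : 0 <= Egap k.
Proof. by apply: esum_ge0 => // s; exact: gap_ge0. Qed.
Lemma Eldist_ge0 k : 0 <= Eldist k.
Proof. by apply: esum_ge0 => // s; exact: dot_ge0. Qed.
Lemma Exdist_ge0 k : 0 <= Exdist k.
Proof. by apply: esum_ge0 => // s; apply: big_Rge0 => i; exact: P_psd. Qed.
Lemma Ersq_ge0 k : 0 <= Ersq k.
Proof. by apply: esum_ge0 => // s; exact: dot_ge0. Qed.

(* [Expect_lcross_step] telescopes the cross term E<lambda - lambda*, r> of
   [Expect_lyap_step]; W absorbs the leftover theta E|lambda - lambda*|^2. *)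
Definition W k : R :=
  theta * Egap k.+1 + / (2 * rho) * (Eldist k.+1 - theta * Eldist k) + / 2 * Exdist k.+1
  + (beta - rho) / 2 * Ersq k.+1.

Lemma W_succ_le k : W k.+1 + / INR m * Egap k.+2 + rho / 2 * / INR m * Ersq k.+1 <= W k.
Proof.
have := Expect_lyap_step k.+1; rewrite Expect_lcross_step.
have : 0 <= Ersq k.+1 * (beta / INR m - rho) by apply: Rmult_le_pos; [exact: Ersq_ge0 | lra].
rewrite /W /theta /Rdiv; lra.
Qed.

Lemma W_le_W0 k : W k <= W 0.
Proof.
elim: k => [|k IH]; first exact: Rle_refl.
have := W_succ_le k; have m0 := Rinv_0_lt_compat _ INR_m_gt0.
have := Rmult_le_pos _ _ (Rlt_le _ _ m0) (Egap_ge0 k.+2).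
have := Rmult_le_pos _ _ (Rlt_le _ _ (Rmult_lt_0_compat _ _ rho_gt0 m0)) (Ersq_ge0 k.+1).
lra.
Qed.

Lemma Eldist_bounded k : Eldist k <= Rmax (Eldist 0) (2 * rho * W 0 / (1 - theta)).
Proof.
apply: affine_recursion_bound theta_bounds _ k => j.
have key : / (2 * rho) * (Eldist j.+1 - theta * Eldist j) <= W 0.
  have := W_le_W0 j; have := Exdist_ge0 j.+1; have [theta0 _] := theta_bounds.
  have := Rmult_le_pos _ _ theta0 (Egap_ge0 j.+1).
  have : 0 <= (beta - rho) / 2 by have := rho_le_beta; lra.
  move/Rmult_le_pos/(_ (Ersq_ge0 j.+1)); rewrite /W; lra.
have := Rmult_le_compat_l (2 * rho) _ _ (ltac:(lra)) key.
by rewrite -Rmult_assoc Rinv_r; lra.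
Qed.

Lemma W_bounded_below k :
  - / (2 * rho) * Rmax (Eldist 0) (2 * rho * W 0 / (1 - theta)) <= W k.
Proof.
have [theta0 theta1] := theta_bounds.
have rho2 : 0 <= / (2 * rho) by apply/Rlt_le/Rinv_0_lt_compat; lra.
have ldist_k : theta * Eldist k <= Rmax (Eldist 0) (2 * rho * W 0 / (1 - theta)).
  by have := Eldist_bounded k; have := Eldist_ge0 k; nra.
have := Rmult_le_compat_l _ _ _ rho2 ldist_k.
have := Rmult_le_pos _ _ rho2 (Eldist_ge0 k.+1).
have := Exdist_ge0 k.+1; have := Rmult_le_pos _ _ theta0 (Egap_ge0 k.+1).
have : 0 <= (beta - rho) / 2 by have := rho_le_beta; lra.
move/Rmult_le_pos/(_ (Ersq_ge0 k.+1)).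
rewrite /W; lra.
Qed.

Lemma Expect_decrease_cv0 :
  Un_cv (fun k => / INR m * Egap k.+2 + rho / 2 * / INR m * Ersq k.+1) 0.
Proof.
have m0 := Rinv_0_lt_compat _ INR_m_gt0.
apply: (Lyapunov_cv0 W _ _ _ _ W_bounded_below) => k; first by rewrite -Rplus_assoc; exact: W_succ_le.
have := Rmult_le_pos _ _ (Rlt_le _ _ m0) (Egap_ge0 k.+2).
have := Rmult_le_pos _ _ (Rlt_le _ _ (Rmult_lt_0_compat _ _ rho_gt0 m0)) (Ersq_ge0 k.+1).
lra.
Qed.

Lemma Egap_cv0 : Un_cv Egap 0.
Proof.
have m0 := Rinv_0_lt_compat _ INR_m_gt0.
apply: (CV_shift _ 2); apply: (Un_cv0_squeeze _ _ _ m0 _ _ Expect_decrease_cv0) => k;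
  rewrite Nat.add_comm; first exact: Egap_ge0.
have := Rmult_le_pos _ _ (Rlt_le _ _ (Rmult_lt_0_compat _ _ rho_gt0 m0)) (Ersq_ge0 k.+1).
rewrite /=; lra.
Qed.

Lemma Ersq_cv0 : Un_cv Ersq 0.
Proof.
have m0 := Rinv_0_lt_compat _ INR_m_gt0.
have c0 : 0 < rho / 2 * / INR m by apply: Rmult_lt_0_compat; lra.
apply: (CV_shift _ 1); apply: (Un_cv0_squeeze _ _ _ c0 _ _ Expect_decrease_cv0) => k;
  rewrite Nat.add_comm; first exact: Ersq_ge0.
have := Rmult_le_pos _ _ (Rlt_le _ _ m0) (Egap_ge0 k.+2).
rewrite /=; lra.
Qed.

Lemma Phi_cv0 : ER_cv (fun k => ExpectER k (fun s => Phi f g A b (xs s) xstar lamstar)) 0.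
Proof.
apply: (ER_cv_Fin _ _ _ _ Egap_cv0) => k.
by rewrite /ExpectER (functional_extensionality _ _ Phi_xs) esumER_Fin.
Qed.

Lemma resid_norm_cv0 : Un_cv (fun k => Expect k (fun s => vnorm (resid A b (xs s)))) 0.
Proof.
change (Un_cv (fun k => Expect k (fun s => sqrt (rsq s))) 0).
exact: (Expect_sqrt_cv0 m_gt0 rsq (fun s => dot_ge0 (res s)) Ersq_cv0).
Qed.
End RandomizedPrimalDual.

Theorem mainTheorem5
  (m : nat) (n : 'I_m -> nat) (q : nat)
  (A : Amat m n q) (b : vec q)
  (f : BV m n -> R) (gf : BV m n -> BV m n)
  (g : forall i : 'I_m, vec (n i) -> ER)
  (L : 'I_m -> R) (Lr : R)
  (beta rho : R)
  (P : forall i : 'I_m, 'I_(n i) -> 'I_(n i) -> R)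
  (x0 : BV m n)
  (xs : seq 'I_m -> BV m n) (lam : seq 'I_m -> vec q)
  (xstar : BV m n) (lamstar : vec q)
  (* standing assumptions on the problem *)
  (Hm : (0 < m)%nat)
  (Hfconv : convexR f) (Hgrad : is_gradient f gf) (Hgcont : continuousBV gf)
  (Hgprop : forall i, properER (g i)) (Hgconv : forall i, convexER (g i))
  (Hglsc : forall i, lscER (g i))
  (* existence of a solution / saddle point *)
  (Hsol_feas : forall r, resid A b xstar r = 0)
  (Hsol_fin : Fobj f g xstar <> PInf)
  (Hsaddle : forall x, ER_le (Fin 0) (Phi f g A b x xstar lamstar))
  (* gradient Lipschitz continuity *)
  (HLpos : forall i, 0 < L i)
  (HLi : forall i x y,
     vnorm (vsub (gf (badd x (Ublk i y)) i) (gf x i)) <= L i * vnorm (y i))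
  (HLr : forall i x y,
     bnorm (bsub (gf (badd x (Ublk i y))) (gf x)) <= Lr * vnorm (y i))
  (* parameters *)
  (Hbeta : 0 < beta) (Hrho : 0 < rho) (Hrho_le : rho <= beta / INR m)
  (HPsym : forall i a c, P i a c = P i c a)
  (HPpsd : forall i z, 0 <= qform (P i) z)
  (HPge : forall i z,
     L i * dot z z + beta * dot (Aiz A i z) (Aiz A i z) <= qform (P i) z)
  (* starting point in dom F *)
  (Hx0 : Fobj f g x0 <> PInf)
  (* Algorithm 1; xs s, lam s are the iterates after the history s of chosen blocks;
     r^k = A x^k - b is resid A b (xs s) *)
  (Hxs0 : xs [::] = x0)
  (Hlam0 : lam [::] = (fun _ => 0))
  (Hkeep : forall s i j, j != i -> xs (rcons s i) j = xs s j)
  (Hargmin : forall s i w,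
     ER_le (subobj A b gf g P beta (xs s) (lam s) i (xs (rcons s i) i))
           (subobj A b gf g P beta (xs s) (lam s) i w))
  (Hlam : forall s i,
     lam (rcons s i) = (fun r => lam s r - rho * resid A b (xs (rcons s i)) r)) :
  ER_cv (fun k => ExpectER k (fun s => Phi f g A b (xs s) xstar lamstar)) 0 /\
  Un_cv (fun k => Expect k (fun s => vnorm (resid A b (xs s)))) 0.
Proof.
by split; [apply: Phi_cv0 | apply: resid_norm_cv0]; eassumption.
Qed.
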